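(* Let $(l,k,b)$ be a suspension triplet for $(X_A,\sigma_A)$ and $c=l-k$. For $(x,r),(x',r')\in X^{\mathbb R}_{A,b}$ we have $(x,r)\sim_{l,k}(x',r')$ if and only if there exist $n,n'\in\mathbb Z_+$ such that $\sigma_A^n(x)=\sigma_A^{n'}(x')$, $r-c^n(x)=r'-c^{n'}(x')$, and $r-c^m(x)\ge l(\sigma_A^m(x))$ for all $0\le m<n$ and $r'-c^{m'}(x')\ge l(\sigma_A^{m'}(x'))$ for all $0\le m'<n'$.
   Context: Let $N>1$ and $A=[A(i,j)]_{i,j=1}^N$ an irreducible $\{0,1\}$-matrix which is not a permutation matrix. $X_A$ is the compact space of sequences $(x_n)_{n\in\mathbb N}$ with $x_n\in\{1,\dots,N\}$ and $A(x_n,x_{n+1})=1$ for all $n$; $\sigma_A((x_n)_n)=(x_{n+1})_n$. $\mathbb Z_+$, $\mathbb R_+$ denote nonnegative integers/reals. For a function $f$ on $X_A$ and $m\in\mathbb Z_+$, $f^m(x)=\sum_{i=0}^{m-1}f(\sigma_A^i(x))$ (so $f^0=0$). $H^A$ is the quotient of $C(X_A,\mathbb Z)$ by $\{u-u\circ\sigma_A\}$, $H^A_+$ the classes of $\mathbb Z_+$-valued continuous functions; $[f]\in H^A_+$ is an order unit if for every $[u]\in H^A$ some $n\in\mathbb N$ has $n[f]-[u]\in H^A_+$. A suspension triplet is $(l,k,b)$ with $l,k\in C(X_A,\mathbb R_+)$, $b\in C(X_A,\mathbb R)$ such that $c=l-k$ is integer-valued with $[c]$ an order unit, and $l-b$,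 $k-b\circ\sigma_A$ take values in $\mathbb Z_+$. $X^{\mathbb R}_{A,b}=\{(x,r)\in X_A\times\mathbb R: r\ge b(x)\}$ and $\sim_{l,k}$ is the equivalence relation on $X^{\mathbb R}_{A,b}$ generated by $(x,r)\sim_{l,k}(\sigma_A(x),r-c(x))$ whenever $r\ge l(x)$. *)

From Stdlib Require Import Reals Lra Lia ZArith Relations.
Open Scope R_scope.

(* Sequences over the alphabet {1,...,N} are represented as nat -> nat. *)
Definition seqN := nat -> nat.

Definition shift (n : nat) (x : seqN) : seqN := fun j => x (j + n)%nat.
Definition sigma (x : seqN) : seqN := shift 1 x.

(* A {0,1}-matrix indexed by 1..N is given as A : nat -> nat -> bool. *)
Definition in_alpha (N i : nat) : Prop := (1 <= i <= N)%nat.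

Definition in_XA (N : nat) (A : nat -> nat -> bool) (x : seqN) : Prop :=
  forall n, in_alpha N (x n) /\ A (x n) (x (S n)) = true.

(* irreducible: for all i,j there is m >= 1 with A^m(i,j) > 0, i.e. an A-path
   of length m from i to j *)
Definition irreducible (N : nat) (A : nat -> nat -> bool) : Prop :=
  forall i j, in_alpha N i -> in_alpha N j ->
    exists (m : nat) (p : nat -> nat), (1 <= m)%nat /\ p 0%nat = i /\ p m = j /\
      forall t, (t < m)%nat -> in_alpha N (p t) /\ A (p t) (p (S t)) = true.

Definition is_permutation_matrix (N : nat) (A : nat -> nat -> bool) : Prop :=
  (forall i, in_alpha N i -> exists j, in_alpha N j /\ A i j = true /\
       forall j', in_alpha N j' -> A i j' = true -> j' = j) /\
  (forall j, in_alpha N j -> exists i, in_alpha N i /\ A i j = true /\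
       forall i', in_alpha N i' -> A i' j = true -> i' = i).

(* Continuity on X_A for the product topology: f(y) is close to f(x) as soon as
   y in X_A agrees with x on a long enough initial block. *)
Definition contXA (N : nat) (A : nat -> nat -> bool) (f : seqN -> R) : Prop :=
  forall x, in_XA N A x -> forall eps, eps > 0 -> exists K : nat,
    forall y, in_XA N A y -> (forall j, (j < K)%nat -> y j = x j) ->
      Rabs (f y - f x) < eps.

Definition int_valued (N : nat) (A : nat -> nat -> bool) (f : seqN -> R) : Prop :=
  forall x, in_XA N A x -> exists z : Z, f x = IZR z.

Definition nonneg_int_valued (N : nat) (A : nat -> nat -> bool) (f : seqN -> R) : Prop :=
  forall x, in_XA N A x -> exists z : nat, f x = INR z.

Definition CZ (N : nat) A (f : seqN -> R) : Prop := contXA N A f /\ int_valued N A f.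

(* [f] in H^A_+ : f is cohomologous (mod u - u o sigma, u in C(X_A,Z))
   to a continuous Z_+-valued function *)
Definition in_HA_plus (N : nat) A (f : seqN -> R) : Prop :=
  exists g u : seqN -> R, contXA N A g /\ nonneg_int_valued N A g /\ CZ N A u /\
    forall x, in_XA N A x -> f x = g x + (u x - u (sigma x)).

Definition order_unit (N : nat) A (f : seqN -> R) : Prop :=
  forall u, CZ N A u -> exists n : nat, (1 <= n)%nat /\
    in_HA_plus N A (fun x => INR n * f x - u x).

Definition suspension_triplet (N : nat) A (l k b : seqN -> R) : Prop :=
  contXA N A l /\ contXA N A k /\ contXA N A b /\
  (forall x, in_XA N A x -> 0 <= l x /\ 0 <= k x) /\
  CZ N A (fun x => l x - k x) /\ order_unit N A (fun x => l x - k x) /\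
  nonneg_int_valued N A (fun x => l x - b x) /\
  nonneg_int_valued N A (fun x => k x - b (sigma x)).

(* Birkhoff sum f^m(x) = sum_{i<m} f(sigma^i x), f^0 = 0 *)
Fixpoint bsum (f : seqN -> R) (m : nat) (x : seqN) : R :=
  match m with
  | O => 0
  | S m' => bsum f m' x + f (shift m' x)
  end.

Definition in_XRb (N : nat) A (b : seqN -> R) (p : seqN * R) : Prop :=
  in_XA N A (fst p) /\ snd p >= b (fst p).

Definition susp_gen (N : nat) A (l k b : seqN -> R) (p q : seqN * R) : Prop :=
  in_XRb N A b p /\ snd p >= l (fst p) /\
  q = (sigma (fst p), snd p - (l (fst p) - k (fst p))).

Definition susp_equiv (N : nat) A (l k b : seqN -> R) : relation (seqN * R) :=
  clos_refl_sym_trans (seqN * R) (susp_gen N A l k b).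

(* Pushing (x, r) n times along its orbit gives (sigma^n x, r - c^n x), and the
   generating move is allowed at stage m exactly when r - c^m x >= l (sigma^m x).
   Each point is related to its admissible pushes, so points with a common
   admissible push are related.  Conversely "having a common admissible push"
   contains the generating moves and is symmetric and transitive: if p, q meet
   after (n, n') and q, s after (m, m') with n' <= m, then pushing p a further
   m - n' steps follows q's admissible steps to where q lands after m. *)

From Pilot Require Import Defs.
From Stdlib Require Import Reals Relations Lra Lia FunctionalExtensionality.
Open Scope R_scope.

Lemma shift0 (x : seqN) : shift 0 x = x.
Proof. apply functional_extensionality; intro j; unfold shift; f_equal; lia. Qed.

Lemma shift_shift (m n : nat) (x : seqN) : shift m (shift n x) = shift (n + m) x.
Proof. apply functional_extensionality; intro j; unfold shift; f_equal; lia. Qed.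

Lemma in_XA_shift (N : nat) (A : nat -> nat -> bool) (n : nat) (x : seqN) :
  in_XA N A x -> in_XA N A (shift n x).
Proof.
  intros Hx j; unfold shift.
  replace (S j + n)%nat with (S (j + n)) by lia; apply Hx.
Qed.

Lemma bsum_add (c : seqN -> R) (n i : nat) (x : seqN) :
  bsum c (n + i) x = bsum c n x + bsum c i (shift n x).
Proof.
  induction i as [|i IH]; simpl.
  - rewrite Nat.add_0_r; ring.
  - rewrite Nat.add_succ_r; simpl; rewrite IH, shift_shift; ring.
Qed.

Section Push.

Variables c l : seqN -> R.

Definition push (n : nat) (p : seqN * R) : seqN * R :=
  (shift n (fst p), snd p - bsum c n (fst p)).

Definition can_push (n : nat) (p : seqN * R) : Prop :=
  forall m, (m < n)%nat -> snd (push m p) >= l (fst (push m p)).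

Definition push_meet (p q : seqN * R) : Prop :=
  exists n n', push n p = push n' q /\ can_push n p /\ can_push n' q.

Lemma push0 (p : seqN * R) : push 0 p = p.
Proof. destruct p as [x r]; unfold push; simpl; rewrite shift0; f_equal; ring. Qed.

Lemma push1 (p : seqN * R) : push 1 p = (Defs.sigma (fst p), snd p - c (fst p)).
Proof. unfold push, Defs.sigma; simpl; rewrite shift0; f_equal; ring. Qed.

Lemma push_add (n i : nat) (p : seqN * R) : push (n + i) p = push i (push n p).
Proof.
  unfold push; simpl; rewrite shift_shift, bsum_add; f_equal; ring.
Qed.

Lemma can_push_add (n i : nat) (p : seqN * R) :
  can_push (n + i) p <-> can_push n p /\ can_push i (push n p).
Proof.
  split.
  - intro H; split.
    + intros m Hm; apply H; lia.
    + intros m Hm; rewrite <- push_add; apply H; lia.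
  - intros [Hn Hi] m Hm; destruct (Nat.lt_ge_cases m n) as [Hmn|Hmn].
    + now apply Hn.
    + replace m with (n + (m - n))%nat by lia.
      rewrite push_add; apply Hi; lia.
Qed.

Lemma push_meet_refl (p : seqN * R) : push_meet p p.
Proof. exists 0%nat, 0%nat; repeat split; intros m Hm; lia. Qed.

Lemma push_meet_sym (p q : seqN * R) : push_meet p q -> push_meet q p.
Proof. intros (n & n' & E & Hp & Hq); exists n', n; auto. Qed.

Lemma push_meet_trans_le (p q s : seqN * R) (n n' m m' : nat) :
  push n p = push n' q -> can_push n p ->
  push m q = push m' s -> can_push m q -> can_push m' s ->
  (n' <= m)%nat -> push_meet p s.
Proof.
  intros E1 Hp E2 Hq Hs Hle.
  assert (Hm : m = (n' + (m - n'))%nat) by lia.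
  rewrite Hm, push_add, <- E1 in E2.
  rewrite Hm, can_push_add, <- E1 in Hq.
  exists (n + (m - n'))%nat, m'.
  rewrite push_add, can_push_add; tauto.
Qed.

Lemma push_meet_trans (p q s : seqN * R) :
  push_meet p q -> push_meet q s -> push_meet p s.
Proof.
  intros (n & n' & E1 & Hp & Hq) (m & m' & E2 & Hq' & Hs).
  destruct (Nat.le_gt_cases n' m).
  - eapply push_meet_trans_le; eauto.
  - apply push_meet_sym.
    apply (push_meet_trans_le s q p m' m n' n); auto; lia.
Qed.

End Push.

Section Suspension.

Variables (N : nat) (A : nat -> nat -> bool) (l k b : seqN -> R).

Let c : seqN -> R := fun y => l y - k y.

Hypothesis b_le_l : forall x, in_XA N A x -> b x <= l x.

Lemma susp_equiv_push_meet (p q : seqN * R) :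
  susp_equiv N A l k b p q -> push_meet c l p q.
Proof.
  induction 1 as [p q Hg | p | p q _ IH | p q s _ IH1 _ IH2].
  - destruct Hg as (_ & Hl & ->).
    exists 1%nat, 0%nat; rewrite push0, push1; repeat split.
    intros m Hm; replace m with 0%nat by lia; now rewrite push0.
    intros m Hm; lia.
  - apply push_meet_refl.
  - now apply push_meet_sym.
  - eapply push_meet_trans; eauto.
Qed.

Lemma susp_equiv_push (n : nat) (p : seqN * R) :
  in_XRb N A b p -> can_push c l n p -> susp_equiv N A l k b p (push c n p).
Proof.
  intros Hp; induction n as [|n IH]; intro Hn.
  - rewrite push0; apply rst_refl.
  - apply rst_trans with (push c n p).
    + apply IH; intros m Hm; apply Hn; lia.
    + assert (Hl : snd (push c n p) >= l (fst (push c n p))) by (apply Hn; lia).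
      assert (HX : in_XA N A (fst (push c n p))) by apply in_XA_shift, Hp.
      pose proof (b_le_l _ HX).
      rewrite <- Nat.add_1_r, push_add, push1.
      apply rst_step; split; [split; [exact HX | lra] | split; [exact Hl | reflexivity]].
Qed.

Theorem susp_equiv_iff_push_meet (p q : seqN * R) :
  in_XRb N A b p -> in_XRb N A b q ->
  susp_equiv N A l k b p q <-> push_meet c l p q.
Proof.
  intros Hp Hq; split.
  - apply susp_equiv_push_meet.
  - intros (n & n' & E & Hn & Hn').
    apply rst_trans with (push c n p); [now apply susp_equiv_push|].
    rewrite E; apply rst_sym; now apply susp_equiv_push.
Qed.

End Suspension.

Lemma suspension_triplet_b_le_l (N : nat) (A : nat -> nat -> bool) (l k b : seqN -> R) :
  suspension_triplet N A l k b -> forall x, in_XA N A x -> b x <= l x.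
Proof.
  intros (_ & _ & _ & _ & _ & _ & Hlb & _) x Hx.
  destruct (Hlb x Hx) as [z Hz]; pose proof (pos_INR z); lra.
Qed.

Theorem lemma2p1 (N : nat) (A : nat -> nat -> bool)
  (HN : (1 < N)%nat) (Hirr : irreducible N A) (Hperm : ~ is_permutation_matrix N A)
  (l k b : seqN -> R) (Htrip : suspension_triplet N A l k b)
  (x x' : seqN) (r r' : R)
  (Hp : in_XRb N A b (x, r)) (Hp' : in_XRb N A b (x', r')) :
  let c := fun y => l y - k y in
  susp_equiv N A l k b (x, r) (x', r') <->
  exists n n' : nat,
    shift n x = shift n' x' /\
    r - bsum c n x = r' - bsum c n' x' /\
    (forall m, (m < n)%nat -> r - bsum c m x >= l (shift m x)) /\
    (forall m', (m' < n')%nat -> r' - bsum c m' x' >= l (shift m' x')).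
Proof.
  intro c.
  rewrite (susp_equiv_iff_push_meet N A l k b
             (suspension_triplet_b_le_l N A l k b Htrip) _ _ Hp Hp').
  unfold push_meet, can_push, push; simpl.
  split.
  - intros (n & n' & E & Hn & Hn'); exists n, n'.
    injection E; auto.
  - intros (n & n' & Ex & Er & Hn & Hn'); exists n, n'.
    split; [f_equal; assumption | auto].
Qed.
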